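(* Let $(X,d)$ be a complete Busemann convex geodesic metric space which is uniformly convex with a modulus of uniform convexity that is monotone or lower semicontinuous from the right. Let $(A,B)$ be a closed convex pair of subsets of $X$ with $B$ bounded, and let $T:A\cup B\to A\cup B$ be a cyclic relatively nonexpansive mapping. Then there exists $(x,y)\in A\times B$ such that $d(x,Tx)=d(y,Ty)=\operatorname{dist}(A,B)$.
   Context: $\operatorname{dist}(A,B)=\inf\{d(x,y):x\in A,y\in B\}$. A geodesic space is one in which any two points are joined by a geodesic segment; a subset is convex if it contains every geodesic segment joining two of its points. $X$ is Busemann convex if for any geodesics $c_1:[0,l_1]\to X$, $c_2:[0,l_2]\to X$, $d(c_1(tl_1),c_2(tl_2))\le (1-t)d(c_1(0),c_2(0))+t\,d(c_1(l_1),c_2(l_2))$ for all $t\in[0,1]$. $X$ is uniformly convex if for every $r>0$ and $\varepsilon\in(0,2]$ there is $\delta\in(0,1]$ such that for all $a,x,y$ with $d(x,a)\le r$, $d(y,a)\le r$, $d(x,y)\ge\varepsilon r$, every midpoint $m$ of $x,y$ satisfies $d(m,a)\le(1-\delta)r$; a function $\delta(r,\varepsilon)$ providing such $\delta$ is a modulus of uniform convexity; it is monotone if it is decreasing in $r$ for each fixed $\varepsilon$, and lower semicontinuous from the right if it is lower semicontinuous from the right in $r$ for each fixed $\varepsilon$. $T$ is relatively nonexpansive if $d(Tx,Ty)\le d(x,y)$ for all $x\in A$, $y\in B$, and cyclic if $T(A)\subseteq B$, $T(B)\subseteq A$. *)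

From Stdlib Require Import Reals.
From Coquelicot Require Import Coquelicot.
Open Scope R_scope.

Definition is_metric {X : Type} (d : X -> X -> R) : Prop :=
  (forall x y, 0 <= d x y) /\
  (forall x y, d x y = 0 <-> x = y) /\
  (forall x y, d x y = d y x) /\
  (forall x y z, d x z <= d x y + d y z).

Definition is_geodesic {X : Type} (d : X -> X -> R) (c : R -> X) (l : R) : Prop :=
  0 <= l /\
  forall s t, 0 <= s <= l -> 0 <= t <= l -> d (c s) (c t) = Rabs (s - t).

Definition geodesic_joining {X : Type} (d : X -> X -> R) (c : R -> X) (l : R) (x y : X) : Prop :=
  is_geodesic d c l /\ c 0 = x /\ c l = y.

Definition geodesic_space {X : Type} (d : X -> X -> R) : Prop :=
  forall x y : X, exists (c : R -> X) (l : R), geodesic_joining d c l x y.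

Definition geod_convex {X : Type} (d : X -> X -> R) (A : X -> Prop) : Prop :=
  forall x y (c : R -> X) (l : R), A x -> A y -> geodesic_joining d c l x y ->
    forall t, 0 <= t <= l -> A (c t).

Definition busemann_convex {X : Type} (d : X -> X -> R) : Prop :=
  forall (c1 c2 : R -> X) (l1 l2 : R), is_geodesic d c1 l1 -> is_geodesic d c2 l2 ->
    forall t, 0 <= t <= 1 ->
      d (c1 (t * l1)) (c2 (t * l2)) <= (1 - t) * d (c1 0) (c2 0) + t * d (c1 l1) (c2 l2).

Definition is_midpoint {X : Type} (d : X -> X -> R) (x y m : X) : Prop :=
  d x m = d x y / 2 /\ d m y = d x y / 2.

Definition modulus_uc {X : Type} (d : X -> X -> R) (delta : R -> R -> R) : Prop :=
  forall r eps, 0 < r -> 0 < eps <= 2 ->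
    0 < delta r eps <= 1 /\
    forall a x y m, d x a <= r -> d y a <= r -> d x y >= eps * r ->
      is_midpoint d x y m -> d m a <= (1 - delta r eps) * r.

Definition uniformly_convex {X : Type} (d : X -> X -> R) : Prop :=
  exists delta, modulus_uc d delta.

Definition modulus_monotone (delta : R -> R -> R) : Prop :=
  forall eps r1 r2, 0 < eps <= 2 -> 0 < r1 -> r1 <= r2 -> delta r2 eps <= delta r1 eps.

Definition modulus_lsc_right (delta : R -> R -> R) : Prop :=
  forall eps r, 0 < eps <= 2 -> 0 < r ->
    forall eta, 0 < eta -> exists theta, 0 < theta /\
      forall s, r < s < r + theta -> delta r eps - eta < delta s eps.

Definition cauchy_seq {X : Type} (d : X -> X -> R) (u : nat -> X) : Prop :=
  forall e, 0 < e -> exists N, forall n m, (N <= n)%nat -> (N <= m)%nat -> d (u n) (u m) < e.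

Definition seq_converges_to {X : Type} (d : X -> X -> R) (u : nat -> X) (x : X) : Prop :=
  forall e, 0 < e -> exists N, forall n, (N <= n)%nat -> d (u n) x < e.

Definition complete_metric {X : Type} (d : X -> X -> R) : Prop :=
  forall u, cauchy_seq d u -> exists x, seq_converges_to d u x.

Definition metric_closed {X : Type} (d : X -> X -> R) (A : X -> Prop) : Prop :=
  forall u x, (forall n, A (u n)) -> seq_converges_to d u x -> A x.

Definition metric_bounded {X : Type} (d : X -> X -> R) (B : X -> Prop) : Prop :=
  exists x0 M, forall b, B b -> d x0 b <= M.

Definition distAB {X : Type} (d : X -> X -> R) (A B : X -> Prop) : Rbar :=
  Glb_Rbar (fun r => exists x y, A x /\ B y /\ r = d x y).

Definition cyclic_map {X : Type} (A B : X -> Prop) (T : X -> X) : Prop :=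
  (forall x, A x -> B (T x)) /\ (forall y, B y -> A (T y)).

Definition relatively_nonexpansive {X : Type} (d : X -> X -> R) (A B : X -> Prop) (T : X -> X) : Prop :=
  forall x y, A x -> B y -> d (T x) (T y) <= d x y.

(* Uniform convexity with a modulus that is monotone or lower semicontinuous from the right
   gives, at every radius r, a definite gain for midpoints of far-apart points of a ball of
   radius slightly larger than r.  Together with Busemann convexity this makes minimising
   sequences Cauchy.  First, it yields a proximal pair
   (x, y) in A x B with d x y = dist(A, B), by minimising d(p, y) asymptotically over
   nearly proximal pairs; boundedness of B keeps this minimum finite.  Next, the orbit of
   such a pair under (x, y) |-> (T y, T x) consists of proximal pairs, and the asymptotic
   radius limsup_n max (d(x, b_n), d(y, a_n)) of the orbit (a_n, b_n) has a unique minimiser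
   among proximal pairs.  Since the swap (x, y) |-> (T y, T x) preserves proximal pairs and
   does not increase the asymptotic radius, the minimiser satisfies x = T y and y = T x,
   whence d(x, T x) = d(y, T y) = dist(A, B). *)

From Stdlib Require Import Reals Lra Lia Classical IndefiniteDescription.
From Coquelicot Require Import Coquelicot.
Open Scope R_scope.

Definition is_inf (E : R -> Prop) (m : R) : Prop :=
  (forall r, E r -> m <= r) /\ (forall e, 0 < e -> exists r, E r /\ r < m + e).

Lemma Glb_Rbar_is_inf (E : R -> Prop) (L : R) :
  (exists r, E r) -> (forall r, E r -> L <= r) ->
  Glb_Rbar E = Finite (real (Glb_Rbar E)) /\ L <= real (Glb_Rbar E) /\
  is_inf E (real (Glb_Rbar E)).
Proof.
  intros [r0 Er0] HL.
  destruct (Glb_Rbar_correct E) as [Hlb Hglb].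
  assert (HLm := Hglb (Finite L) HL).
  assert (Hmr0 := Hlb r0 Er0).
  destruct (Glb_Rbar E) as [m | |]; simpl in *; try contradiction.
  split; [reflexivity | split; [exact HLm | split]].
  - exact Hlb.
  - intros e He. apply NNPP; intro Hno.
    assert (Hlb' : is_lb_Rbar E (Finite (m + e))).
    { intros r Er. simpl. apply Rnot_lt_le; intro Hr. apply Hno. now exists r. }
    specialize (Hglb _ Hlb'). simpl in Hglb. lra.
Qed.

Lemma eventually_inv_succ_lt (th : R) : 0 < th -> eventually (fun n => / (INR n + 1) < th).
Proof.
  intros Hth. destruct (archimed_cor1 th Hth) as [N [HN HN0]].
  exists N. intros n Hn. apply Rle_lt_trans with (/ INR N); [|exact HN].
  apply Rinv_le_contravar; [apply lt_0_INR; exact HN0|].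
  apply le_INR in Hn. lra.
Qed.

Definition robust_uniformly_convex {X : Type} (d : X -> X -> R) : Prop :=
  forall r e, 0 <= r -> 0 < e -> exists th c, 0 < th /\ 0 < c /\
    forall a x y m, d x a <= r + th -> d y a <= r + th -> e <= d x y ->
      is_midpoint d x y m -> d m a <= r - c.

Lemma modulus_lower_bound_right (delta : R -> R -> R) :
  (forall r eps, 0 < r -> 0 < eps <= 2 -> 0 < delta r eps) ->
  modulus_monotone delta \/ modulus_lsc_right delta ->
  forall r eps, 0 < r -> 0 < eps <= 2 -> exists th k, 0 < th <= 1 /\ 0 < k /\
    forall s, r <= s <= r + th -> k <= delta s eps.
Proof.
  intros Hpos [Hmon | Hlsc] r eps Hr Heps.
  - exists 1, (delta (r + 1) eps). split; [lra|]. split; [apply Hpos; lra|].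
    intros s Hs. apply Hmon; lra.
  - assert (Hd := Hpos r eps Hr Heps).
    destruct (Hlsc eps r Heps Hr (delta r eps / 2)) as [th [Hth Hnear]]; [lra|].
    exists (Rmin 1 (th / 2)), (delta r eps / 2).
    assert (Hmin : 0 < Rmin 1 (th / 2) <= 1 /\ Rmin 1 (th / 2) <= th / 2)
      by (split; [split; [apply Rmin_glb_lt; lra | apply Rmin_l] | apply Rmin_r]).
    split; [lra|]. split; [lra|].
    intros s Hs. destruct (Rle_lt_or_eq_dec r s) as [Hlt | <-]; [lra| |lra].
    specialize (Hnear s ltac:(lra)). lra.
Qed.

Lemma robust_uniformly_convex_of_modulus {X : Type} (d : X -> X -> R) (delta : R -> R -> R) :
  is_metric d -> modulus_uc d delta -> modulus_monotone delta \/ modulus_lsc_right delta ->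
  robust_uniformly_convex d.
Proof.
  intros [_ [_ [Hsym Htri]]] Huc Hreg r e Hr He.
  destruct (Rle_lt_or_eq_dec 0 r Hr) as [Hr0 | <-].
  2:{ exists (e / 4), 1. split; [lra|]. split; [lra|].
      intros a x y m Hx Hy Hxy _. pose proof (Htri x a y) as Ht.
      rewrite (Hsym a y) in Ht. lra. }
  set (eps := Rmin 1 (e / (r + 1))).
  assert (Heps : 0 < eps <= 1 /\ eps <= e / (r + 1)).
  { unfold eps. split; [split; [apply Rmin_glb_lt; [lra | apply Rdiv_lt_0_compat; lra]
                               | apply Rmin_l] | apply Rmin_r]. }
  destruct (modulus_lower_bound_right delta
              (fun s eps' Hs Heps' => proj1 (proj1 (Huc s eps' Hs Heps'))) Hreg r eps Hr0
              ltac:(lra)) as [th [k [Hth [Hk Hnear]]]].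
  assert (Hrk : 0 < r * k) by (apply Rmult_lt_0_compat; lra).
  set (th' := Rmin th (r * k / 2)).
  assert (Hth' : 0 < th' /\ th' <= th /\ th' <= r * k / 2)
    by (unfold th'; split; [apply Rmin_glb_lt; lra | split; [apply Rmin_l | apply Rmin_r]]).
  exists th', (r * k / 2). split; [lra|]. split; [lra|].
  intros a x y m Hx Hy Hxy Hm.
  set (s := r + th') in *.
  assert (Hs : r <= s <= r + th /\ s <= r + 1 /\ s <= r + r * k / 2) by (unfold s; lra).
  destruct (Huc s eps ltac:(lra) ltac:(lra)) as [[_ Hle1] Hmid].
  assert (Hks := Hnear s ltac:(lra)).
  (* the choice of [eps] makes [e] exceed [eps * s] for every radius [s <= r + 1] *)
  assert (Hepss : eps * s <= e).
  { apply Rle_trans with (e / (r + 1) * (r + 1)).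
    - apply Rmult_le_compat; lra.
    - right; field; lra. }
  assert (Hma := Hmid a x y m Hx Hy ltac:(lra) Hm).
  assert ((1 - delta s eps) * s <= (1 - k) * s) by (apply Rmult_le_compat_r; lra).
  assert (k * r <= k * s) by (apply Rmult_le_compat_l; lra).
  lra.
Qed.

Section Development.

Variables (X : Type) (d : X -> X -> R).
Hypothesis metric : is_metric d.
Hypothesis geodesic : geodesic_space d.
Hypothesis busemann : busemann_convex d.
Hypothesis robust : robust_uniformly_convex d.

Let d_ge0 : forall x y, 0 <= d x y := proj1 metric.
Let d_eq0 : forall x y, d x y = 0 <-> x = y := proj1 (proj2 metric).
Let d_sym : forall x y, d x y = d y x := proj1 (proj2 (proj2 metric)).
Let d_tri : forall x y z, d x z <= d x y + d y z := proj2 (proj2 (proj2 metric)).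

Lemma geodesic_joining_length c l x y : geodesic_joining d c l x y -> d x y = l.
Proof.
  intros [[Hl Hc] [<- <-]]. rewrite Hc by lra.
  rewrite Rabs_minus_sym, Rabs_pos_eq; lra.
Qed.

Definition mid (x y : X) : X :=
  let (c, Hc) := constructive_indefinite_description _ (geodesic x y) in
  c (/ 2 * proj1_sig (constructive_indefinite_description _ Hc)).

Lemma mid_spec x y : exists c l, geodesic_joining d c l x y /\ mid x y = c (/ 2 * l).
Proof.
  unfold mid. destruct (constructive_indefinite_description _ _) as [c Hc].
  destruct (constructive_indefinite_description _ _) as [l Hl]. now exists c, l.
Qed.

Lemma mid_is_midpoint x y : is_midpoint d x y (mid x y).
Proof.
  destruct (mid_spec x y) as [c [l [Hj ->]]]. unfold is_midpoint.
  rewrite (geodesic_joining_length c l x y Hj).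
  destruct Hj as [[Hl Hc] [<- <-]].
  split; rewrite Hc by lra; rewrite Rabs_minus_sym, Rabs_pos_eq; lra.
Qed.

Lemma geod_convex_mid (P : X -> Prop) x y : geod_convex d P -> P x -> P y -> P (mid x y).
Proof.
  intros HP Hx Hy. destruct (mid_spec x y) as [c [l [Hj ->]]].
  apply (HP x y c l Hx Hy Hj). destruct Hj as [[Hl _] _]. lra.
Qed.

Lemma dist_mid_mid x x' y y' : d (mid x x') (mid y y') <= (d x y + d x' y') / 2.
Proof.
  destruct (mid_spec x x') as [c1 [l1 [[G1 [E1 E1']] ->]]].
  destruct (mid_spec y y') as [c2 [l2 [[G2 [E2 E2']] ->]]].
  pose proof (busemann c1 c2 l1 l2 G1 G2 (/ 2) ltac:(lra)) as H.
  rewrite E1, E1', E2, E2' in H. lra.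
Qed.

Lemma dist_limit_le (xs ys : nat -> X) x y r :
  seq_converges_to d xs x -> seq_converges_to d ys y ->
  (forall e, 0 < e -> eventually (fun n => d (xs n) (ys n) <= r + e)) -> d x y <= r.
Proof.
  intros Hx Hy Hr. apply Rle_plus_epsilon; intros e He.
  assert (Ex : eventually (fun n => d (xs n) x < e / 3)) by exact (Hx (e / 3) ltac:(lra)).
  assert (Ey : eventually (fun n => d (ys n) y < e / 3)) by exact (Hy (e / 3) ltac:(lra)).
  destruct (filter_and _ _ (filter_and _ _ Ex Ey) (Hr (e / 3) ltac:(lra))) as [N HN].
  destruct (HN N (le_n N)) as [[H1 H2] H3].
  pose proof (d_tri x (xs N) y). pose proof (d_tri (xs N) (ys N) y).
  rewrite (d_sym x (xs N)) in *. lra.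
Qed.

Lemma cauchy_of_mid_far (u : nat -> X) a r : 0 <= r ->
  (forall th, 0 < th -> eventually (fun n => d (u n) a <= r + th)) ->
  (forall c, 0 < c -> exists N, forall n m, (N <= n)%nat -> (N <= m)%nat ->
     r - c <= d (mid (u n) (u m)) a) ->
  cauchy_seq d u.
Proof.
  intros Hr Hnear Hfar e He.
  destruct (robust r e Hr He) as [th [c [Hth [Hc Hgain]]]].
  destruct (Hnear th Hth) as [N1 H1]. destruct (Hfar (c / 2) ltac:(lra)) as [N2 H2].
  exists (Nat.max N1 N2). intros n m Hn Hm. apply Rnot_le_lt; intro Hnm.
  pose proof (Hgain a _ _ _ (H1 n ltac:(lia)) (H1 m ltac:(lia)) Hnm (mid_is_midpoint _ _)).
  pose proof (H2 n m ltac:(lia) ltac:(lia)). lra.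
Qed.

Lemma proximal_partner_close (P Q : X -> Prop) D :
  0 <= D -> geod_convex d P -> (forall u v, P u -> Q v -> D <= d u v) ->
  forall e, 0 < e -> exists eta, 0 < eta /\
    forall x x' y y', P x -> P x' -> Q y -> Q y' -> d x y <= D -> d x' y' <= D ->
      d y y' < eta -> d x x' < e.
Proof.
  intros HD HP HPQ e He.
  destruct (robust D e HD He) as [th [c [Hth [Hc Hgain]]]].
  exists th. split; [exact Hth|].
  intros x x' y y' Px Px' Qy Qy' Hxy Hxy' Hyy'. apply Rnot_le_lt; intro Hxx'.
  assert (Hx'y : d x' y <= D + th)
    by (pose proof (d_tri x' y' y) as Ht; rewrite (d_sym y' y) in Ht; lra).
  pose proof (Hgain y x x' (mid x x') ltac:(lra) Hx'y Hxx' (mid_is_midpoint x x')).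
  pose proof (HPQ _ y (geod_convex_mid P x x' HP Px Px') Qy). lra.
Qed.

Section Proximal.

Variables (A B : X -> Prop) (D : R).
Hypotheses (convex_A : geod_convex d A) (convex_B : geod_convex d B).
Hypotheses (closed_A : metric_closed d A) (closed_B : metric_closed d B).
Hypothesis complete : complete_metric d.
Hypothesis bounded_B : metric_bounded d B.
Hypothesis D_is_inf : is_inf (fun r => exists x y, A x /\ B y /\ r = d x y) D.

Let D_le x y : A x -> B y -> D <= d x y.
Proof. intros Ax By. apply (proj1 D_is_inf). now exists x, y. Qed.

Let D_approx e : 0 < e -> exists x y, A x /\ B y /\ d x y < D + e.
Proof.
  intros He. destruct (proj2 D_is_inf e He) as [r [[x [y [Ax [By ->]]]] Hr]].
  now exists x, y.
Qed.

Let D_ge0 : 0 <= D.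
Proof.
  apply Rnot_lt_le; intro HD. destruct (D_approx (- D) ltac:(lra)) as [x [y [_ [_ Hxy]]]].
  pose proof (d_ge0 x y). lra.
Qed.

Lemma cauchy_of_converging_partner (xs ys : nat -> X) y :
  (forall n, A (xs n)) -> B y -> seq_converges_to d ys y ->
  (forall e, 0 < e -> eventually (fun n => d (xs n) (ys n) <= D + e)) ->
  cauchy_seq d xs.
Proof.
  intros Axs By Hys Hnear. apply (cauchy_of_mid_far xs y D D_ge0).
  - intros th Hth.
    assert (Ey : eventually (fun n => d (ys n) y < th / 2)) by exact (Hys (th / 2) ltac:(lra)).
    eapply filter_imp; [| exact (filter_and _ _ Ey (Hnear (th / 2) ltac:(lra)))].
    intros n [H1 H2]. pose proof (d_tri (xs n) (ys n) y). lra.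
  - intros c Hc. exists 0%nat. intros n m _ _.
    pose proof (D_le _ y (geod_convex_mid A _ _ convex_A (Axs n) (Axs m)) By). lra.
Qed.

(* [rs] is the limit, as [t] decreases to 0, of the infimum of [d p y] over the pairs of
   [A x B] at distance less than [D + t]. *)
Lemma exists_near_proximal_seq_min_dist p M : (forall y, B y -> d p y <= M) ->
  exists rs (xs ys : nat -> X), 0 <= rs /\
    (forall n, A (xs n) /\ B (ys n) /\ d (xs n) (ys n) < D + / (INR n + 1) /\
               d p (ys n) < rs + / (INR n + 1)) /\
    (forall c, 0 < c -> exists t, 0 < t /\
       forall x y, A x -> B y -> d x y < D + t -> rs - c <= d p y).
Proof.
  intros HM.
  set (reach := fun r => forall t, 0 < t ->
                  exists x y, A x /\ B y /\ d x y < D + t /\ d p y < r).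
  destruct (Glb_Rbar_is_inf reach 0) as [_ [Hrs0 [Hlow Happ]]].
  - exists (M + 1). intros t Ht. destruct (D_approx t Ht) as [x [y [Ax [By Hxy]]]].
    exists x, y. pose proof (HM y By). repeat split; auto; lra.
  - intros r Hr. destruct (Hr 1 ltac:(lra)) as [x [y [_ [_ [_ Hy]]]]].
    pose proof (d_ge0 p y). lra.
  - set (rs := real (Glb_Rbar reach)) in *.
    assert (Hup : forall c, 0 < c -> reach (rs + c)).
    { intros c Hc t Ht. destruct (Happ c Hc) as [r [Hr Hrc]].
      destruct (Hr t Ht) as [x [y [Ax [By [Hxy Hy]]]]].
      exists x, y. repeat split; auto. lra. }
    assert (Hseq : forall n : nat, exists q : X * X, A (fst q) /\ B (snd q) /\
              d (fst q) (snd q) < D + / (INR n + 1) /\ d p (snd q) < rs + / (INR n + 1)).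
    { intros n. assert (Hn : 0 < / (INR n + 1)) by (apply Rinv_0_lt_compat; pose proof (pos_INR n); lra).
      destruct (Hup _ Hn _ Hn) as [x [y Hxy]]. now exists (x, y). }
    destruct (functional_choice _ Hseq) as [f Hf].
    exists rs, (fun n => fst (f n)), (fun n => snd (f n)).
    split; [exact Hrs0 | split; [exact Hf|]].
    intros c Hc.
    assert (Hnot : ~ reach (rs - c)) by (intro H; pose proof (Hlow _ H); lra).
    apply NNPP; intro Hno; apply Hnot; intros t Ht.
    apply NNPP; intro Hno'; apply Hno; exists t; split; [exact Ht|].
    intros x y Ax By Hxy. apply Rnot_lt_le; intro Hy. apply Hno'. now exists x, y.
Qed.

Lemma exists_proximal_pair : exists x y, A x /\ B y /\ d x y = D.
Proof.
  destruct bounded_B as [p [M HM]].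
  destruct (exists_near_proximal_seq_min_dist p M HM)
    as [rs [xs [ys [Hrs0 [Hseq Hfar]]]]].
  assert (Cys : cauchy_seq d ys).
  { apply (cauchy_of_mid_far ys p rs Hrs0).
    - intros th Hth. eapply filter_imp; [| exact (eventually_inv_succ_lt th Hth)].
      intros n H.
      destruct (Hseq n) as [_ [_ [_ Hn]]]. rewrite d_sym. lra.
    - intros c Hc. destruct (Hfar c Hc) as [t [Ht Hfar_t]].
      destruct (eventually_inv_succ_lt t Ht) as [N HN].
      exists N. intros n m Hn Hm. rewrite d_sym.
      destruct (Hseq n) as [Axn [Byn [Hn' _]]]. destruct (Hseq m) as [Axm [Bym [Hm' _]]].
      apply (Hfar_t (mid (xs n) (xs m)));
        [ now apply geod_convex_mid | now apply geod_convex_mid |].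
      pose proof (dist_mid_mid (xs n) (xs m) (ys n) (ys m)).
      pose proof (HN n Hn). pose proof (HN m Hm). lra. }
  destruct (complete ys Cys) as [y Hy].
  assert (By : B y) by (apply (closed_B ys); auto; intro n; apply (Hseq n)).
  assert (Hclose : forall e, 0 < e -> eventually (fun n => d (xs n) (ys n) <= D + e)).
  { intros e He. eapply filter_imp; [| exact (eventually_inv_succ_lt e He)].
    intros n H.
    destruct (Hseq n) as [_ [_ [Hn _]]]. lra. }
  assert (Cxs : cauchy_seq d xs)
    by (apply (cauchy_of_converging_partner xs ys y); auto; intro n; apply (Hseq n)).
  destruct (complete xs Cxs) as [x Hx].
  assert (Ax : A x) by (apply (closed_A xs); auto; intro n; apply (Hseq n)).
  exists x, y. repeat split; auto.
  apply Rle_antisym; [exact (dist_limit_le xs ys x y D Hx Hy Hclose) | exact (D_le x y Ax By)].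
Qed.

Definition proximal_pair x y : Prop := A x /\ B y /\ d x y <= D.

Lemma proximal_pair_mid x y x' y' :
  proximal_pair x y -> proximal_pair x' y' -> proximal_pair (mid x x') (mid y y').
Proof.
  intros [Ax [By Hxy]] [Ax' [By' Hxy']].
  split; [now apply geod_convex_mid | split; [now apply geod_convex_mid|]].
  pose proof (dist_mid_mid x x' y y'). lra.
Qed.

Lemma proximal_pair_limit (xs ys : nat -> X) x y :
  (forall n, proximal_pair (xs n) (ys n)) ->
  seq_converges_to d xs x -> seq_converges_to d ys y -> proximal_pair x y.
Proof.
  intros Hp Hx Hy. split; [|split].
  - apply (closed_A xs); auto. intro n. apply (Hp n).
  - apply (closed_B ys); auto. intro n. apply (Hp n).
  - apply (dist_limit_le xs ys x y D Hx Hy). intros e He. exists 0%nat.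
    intros n _. destruct (Hp n) as [_ [_ Hn]]. lra.
Qed.

Variable T : X -> X.
Hypothesis cyclic : cyclic_map A B T.
Hypothesis nonexpansive : relatively_nonexpansive d A B T.

Section Orbit.

Variables a b : nat -> X.
Hypothesis orbit_proximal : forall n, proximal_pair (a n) (b n).
Hypothesis orbit_step : forall n, a (S n) = T (b n) /\ b (S n) = T (a n).

Definition asym_radius_bound x y r : Prop :=
  eventually (fun n => Rmax (d x (b n)) (d y (a n)) <= r).

(* The asymptotic radius [limsup_n max (d x (b n), d y (a n))] of the pair [(x, y)]
   relative to the orbit. *)
Definition asym_radius x y : R := real (Glb_Rbar (asym_radius_bound x y)).

Lemma asym_radius_is_inf x y :
  0 <= asym_radius x y /\ is_inf (asym_radius_bound x y) (asym_radius x y).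
Proof.
  destruct bounded_B as [p [M HM]].
  refine (proj2 (Glb_Rbar_is_inf _ 0 _ _)).
  - exists (d x p + d y p + M + D). exists 0%nat. intros n _.
    destruct (orbit_proximal n) as [_ [Bbn Hn]]. pose proof (HM _ Bbn).
    pose proof (d_tri x p (b n)). pose proof (d_tri y p (b n)).
    pose proof (d_tri y (b n) (a n)). rewrite (d_sym (b n) (a n)) in *.
    pose proof (d_ge0 x p). pose proof (d_ge0 y p).
    apply Rmax_lub; lra.
  - intros r [N HN]. specialize (HN N (le_n N)).
    pose proof (Rmax_l (d x (b N)) (d y (a N))). pose proof (d_ge0 x (b N)). lra.
Qed.

Lemma asym_radius_le x y r : asym_radius_bound x y r -> asym_radius x y <= r.
Proof. apply (proj1 (proj2 (asym_radius_is_inf x y))). Qed.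

Lemma asym_radius_bound_above x y e : 0 < e -> asym_radius_bound x y (asym_radius x y + e).
Proof.
  intros He. destruct (proj2 (proj2 (asym_radius_is_inf x y)) e He) as [r [Hr Hlt]].
  unfold asym_radius_bound in *. eapply filter_imp; [| exact Hr]. intros n Hn. lra.
Qed.

Lemma asym_radius_lipschitz x y x' y' :
  asym_radius x' y' <= asym_radius x y + d x x' + d y y'.
Proof.
  apply Rle_plus_epsilon; intros e He. apply asym_radius_le.
  unfold asym_radius_bound. eapply filter_imp; [| exact (asym_radius_bound_above x y e He)]. intros n Hn.
  pose proof (Rmax_l (d x (b n)) (d y (a n))). pose proof (Rmax_r (d x (b n)) (d y (a n))).
  pose proof (d_tri x' x (b n)). pose proof (d_tri y' y (a n)).
  pose proof (d_ge0 x x'). pose proof (d_ge0 y y').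
  rewrite (d_sym x' x), (d_sym y' y) in *.
  apply Rmax_lub; lra.
Qed.

Lemma asym_radius_mid_gain r e : 0 <= r -> 0 < e -> exists th c, 0 < th /\ 0 < c /\
  forall x y x' y', asym_radius x y < r + th -> asym_radius x' y' < r + th ->
    e <= d x x' -> e <= d y y' -> asym_radius (mid x x') (mid y y') <= r - c.
Proof.
  intros Hr He. destruct (robust r e Hr He) as [th [c [Hth [Hc Hgain]]]].
  exists th, c. split; [exact Hth | split; [exact Hc|]].
  intros x y x' y' Hxy Hx'y' Hxx' Hyy'. apply asym_radius_le.
  assert (E := asym_radius_bound_above x y (r + th - asym_radius x y) ltac:(lra)).
  assert (E' := asym_radius_bound_above x' y' (r + th - asym_radius x' y') ltac:(lra)).
  unfold asym_radius_bound in *. eapply filter_imp; [| exact (filter_and _ _ E E')]. intros n [Hn Hn'].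
  pose proof (Rmax_l (d x (b n)) (d y (a n))). pose proof (Rmax_r (d x (b n)) (d y (a n))).
  pose proof (Rmax_l (d x' (b n)) (d y' (a n))). pose proof (Rmax_r (d x' (b n)) (d y' (a n))).
  apply Rmax_lub; [apply (Hgain (b n) x x') | apply (Hgain (a n) y y')];
    auto using mid_is_midpoint; lra.
Qed.

Definition min_asym_radius : R :=
  real (Glb_Rbar (fun r => exists x y, proximal_pair x y /\ r = asym_radius x y)).

Lemma min_asym_radius_is_inf : 0 <= min_asym_radius /\
  is_inf (fun r => exists x y, proximal_pair x y /\ r = asym_radius x y) min_asym_radius.
Proof.
  refine (proj2 (Glb_Rbar_is_inf _ 0 _ _)).
  - exists (asym_radius (a 0%nat) (b 0%nat)). now exists (a 0%nat), (b 0%nat).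
  - intros r [x [y [_ ->]]]. apply asym_radius_is_inf.
Qed.

Lemma min_asym_radius_le x y : proximal_pair x y -> min_asym_radius <= asym_radius x y.
Proof. intros Hp. apply (proj1 (proj2 min_asym_radius_is_inf)). now exists x, y. Qed.

Lemma asym_radius_minimizers_close e : 0 < e -> exists th, 0 < th /\
  forall x y x' y', proximal_pair x y -> proximal_pair x' y' ->
    asym_radius x y < min_asym_radius + th -> asym_radius x' y' < min_asym_radius + th ->
    d x x' < e /\ d y y' < e.
Proof.
  intros He.
  destruct (proximal_partner_close A B D D_ge0 convex_A D_le e He) as [eta1 [Heta1 HAB]].
  assert (D_le' : forall u v, B u -> A v -> D <= d u v) by (intros; rewrite d_sym; auto).
  destruct (proximal_partner_close B A D D_ge0 convex_B D_le' e He) as [eta2 [Heta2 HBA]].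
  set (e' := Rmin e (Rmin eta1 eta2)).
  assert (He' : 0 < e' /\ e' <= e /\ e' <= eta1 /\ e' <= eta2).
  { unfold e'. split; [repeat apply Rmin_glb_lt; lra | split; [apply Rmin_l|]].
    split; eapply Rle_trans; [apply Rmin_r | apply Rmin_l | apply Rmin_r | apply Rmin_r]. }
  destruct (asym_radius_mid_gain min_asym_radius e' (proj1 min_asym_radius_is_inf)
              (proj1 He')) as [th [c [Hth [Hc Hgain]]]].
  exists th. split; [exact Hth|].
  intros x y x' y' Hp Hp' Hr Hr'.
  (* the midpoints of two minimising pairs that are far apart in both coordinates would
     form a proximal pair of smaller asymptotic radius *)
  assert (Hnot : ~ (e' <= d x x' /\ e' <= d y y')).
  { intros [H1 H2]. pose proof (Hgain x y x' y' Hr Hr' H1 H2).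
    pose proof (min_asym_radius_le _ _ (proximal_pair_mid x y x' y' Hp Hp')). lra. }
  destruct Hp as [Ax [By Hxy]]. destruct Hp' as [Ax' [By' Hxy']].
  split; apply Rnot_le_lt; intro H; apply Hnot; split; try lra.
  - apply Rnot_lt_le; intro Hyy'.
    pose proof (HAB x x' y y' Ax Ax' By By' Hxy Hxy' ltac:(lra)). lra.
  - apply Rnot_lt_le; intro Hxx'. rewrite d_sym in Hxy, Hxy'.
    pose proof (HBA y y' x x' By By' Ax Ax' Hxy Hxy' ltac:(lra)). lra.
Qed.

Lemma exists_asym_radius_minimizer :
  exists x y, proximal_pair x y /\ asym_radius x y <= min_asym_radius.
Proof.
  destruct min_asym_radius_is_inf as [_ [_ Happ]].
  assert (Hseq : forall n : nat, exists q : X * X, proximal_pair (fst q) (snd q) /\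
            asym_radius (fst q) (snd q) < min_asym_radius + / (INR n + 1)).
  { intros n. destruct (Happ (/ (INR n + 1))) as [r [[x [y [Hp ->]]] Hr]].
    - apply Rinv_0_lt_compat. pose proof (pos_INR n). lra.
    - now exists (x, y). }
  destruct (functional_choice _ Hseq) as [f Hf].
  set (xs := fun n => fst (f n)). set (ys := fun n => snd (f n)).
  assert (Cauchy : cauchy_seq d xs /\ cauchy_seq d ys).
  { split; intros e He;
      destruct (asym_radius_minimizers_close e He) as [th [Hth Hclose]];
      destruct (eventually_inv_succ_lt th Hth) as [N HN]; exists N; intros n m Hn Hm;
      destruct (Hf n) as [Hpn Hrn]; destruct (Hf m) as [Hpm Hrm];
      pose proof (HN n Hn); pose proof (HN m Hm);
      destruct (Hclose _ _ _ _ Hpn Hpm ltac:(lra) ltac:(lra)); assumption. }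
  destruct Cauchy as [Cxs Cys].
  destruct (complete xs Cxs) as [x Hx]. destruct (complete ys Cys) as [y Hy].
  exists x, y. split; [exact (proximal_pair_limit xs ys x y (fun n => proj1 (Hf n)) Hx Hy)|].
  apply Rle_plus_epsilon; intros e He.
  assert (Ex : eventually (fun n => d (xs n) x < e / 3)) by exact (Hx (e / 3) ltac:(lra)).
  assert (Ey : eventually (fun n => d (ys n) y < e / 3)) by exact (Hy (e / 3) ltac:(lra)).
  destruct (filter_and _ _ (filter_and _ _ Ex Ey) (eventually_inv_succ_lt (e / 3) ltac:(lra)))
    as [N HN].
  destruct (HN N (le_n N)) as [[H1 H2] H3].
  pose proof (asym_radius_lipschitz (xs N) (ys N) x y). pose proof (proj2 (Hf N)).
  unfold xs, ys in *. lra.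
Qed.

Lemma asym_radius_minimizer_unique x y x' y' :
  proximal_pair x y -> proximal_pair x' y' ->
  asym_radius x y <= min_asym_radius -> asym_radius x' y' <= min_asym_radius ->
  x = x' /\ y = y'.
Proof.
  intros Hp Hp' Hr Hr'.
  assert (Hsmall : forall e, 0 < e -> d x x' < e /\ d y y' < e).
  { intros e He. destruct (asym_radius_minimizers_close e He) as [th [Hth Hclose]].
    apply Hclose; auto; lra. }
  split; apply d_eq0; apply Rle_antisym; try apply d_ge0; apply Rle_plus_epsilon;
    intros e He; destruct (Hsmall e He); lra.
Qed.

Lemma asym_radius_swap x y : A x -> B y -> asym_radius (T y) (T x) <= asym_radius x y.
Proof.
  intros Ax By. apply Rle_plus_epsilon; intros e He. apply asym_radius_le.
  destruct (asym_radius_bound_above x y e He) as [N HN].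
  exists (S N). intros [|n] Hn; [lia|].
  destruct (orbit_step n) as [-> ->]. destruct (orbit_proximal n) as [An [Bn _]].
  specialize (HN n ltac:(lia)).
  pose proof (nonexpansive _ _ An By). pose proof (nonexpansive _ _ Ax Bn).
  pose proof (Rmax_l (d x (b n)) (d y (a n))). pose proof (Rmax_r (d x (b n)) (d y (a n))).
  rewrite (d_sym (T (a n)) (T y)), (d_sym (a n) y) in *.
  apply Rmax_lub; lra.
Qed.

Lemma exists_swap_fixed_proximal_pair : exists x y, proximal_pair x y /\ x = T y /\ y = T x.
Proof.
  destruct exists_asym_radius_minimizer as [x [y [Hp Hr]]].
  destruct cyclic as [TA TB]. pose proof Hp as [Ax [By Hxy]].
  assert (Hp' : proximal_pair (T y) (T x)).
  { split; [now apply TB | split; [now apply TA|]].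
    rewrite d_sym. pose proof (nonexpansive x y Ax By). lra. }
  pose proof (asym_radius_swap x y Ax By).
  destruct (asym_radius_minimizer_unique x y (T y) (T x) Hp Hp' Hr ltac:(lra)) as [Hx Hy].
  now exists x, y.
Qed.

End Orbit.

Fixpoint swap_orbit (x y : X) (n : nat) : X * X :=
  match n with
  | O => (x, y)
  | S k => let q := swap_orbit x y k in (T (snd q), T (fst q))
  end.

Lemma exists_best_proximity_pair : exists x y, proximal_pair x y /\ x = T y /\ y = T x.
Proof.
  destruct exists_proximal_pair as [x0 [y0 [Ax0 [By0 Hxy0]]]].
  destruct cyclic as [TA TB].
  apply (exists_swap_fixed_proximal_pair (fun n => fst (swap_orbit x0 y0 n))
                                         (fun n => snd (swap_orbit x0 y0 n))).
  - intro n; induction n as [|n [An [Bn Hn]]]; simpl.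
    + repeat split; auto; lra.
    + split; [now apply TB | split; [now apply TA|]].
      rewrite d_sym. pose proof (nonexpansive _ _ An Bn). lra.
  - intro n. split; reflexivity.
Qed.

End Proximal.
End Development.

Theorem mainTheorem5 (X : Type) (d : X -> X -> R) (A B : X -> Prop) (T : X -> X) :
  is_metric d ->
  complete_metric d ->
  busemann_convex d ->
  geodesic_space d ->
  (exists delta : R -> R -> R, modulus_uc d delta /\
     (modulus_monotone delta \/ modulus_lsc_right delta)) ->
  (exists a, A a) -> (exists b, B b) ->
  metric_closed d A -> metric_closed d B ->
  geod_convex d A -> geod_convex d B ->
  metric_bounded d B ->
  cyclic_map A B T ->
  relatively_nonexpansive d A B T ->
  exists x y, A x /\ B y /\
    Finite (d x (T x)) = distAB d A B /\ Finite (d y (T y)) = distAB d A B.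
Proof.
  intros metric complete busemann geodesic [delta [Huc Hreg]] [a0 Aa0] [b0 Bb0]
    closed_A closed_B convex_A convex_B bounded_B cyclic nonexpansive.
  pose proof (robust_uniformly_convex_of_modulus d delta metric Huc Hreg) as robust.
  destruct (Glb_Rbar_is_inf (fun r => exists x y, A x /\ B y /\ r = d x y) 0)
    as [Hdist [_ D_is_inf]].
  - now exists (d a0 b0), a0, b0.
  - intros r [x [y [_ [_ ->]]]]. apply metric.
  fold (distAB d A B) in *. set (D := real (distAB d A B)) in *.
  destruct (exists_best_proximity_pair X d metric geodesic busemann robust A B D
              convex_A convex_B closed_A closed_B complete bounded_B D_is_inf T
              cyclic nonexpansive) as [x [y [[Ax [By Hxy]] [Hx Hy]]]].
  assert (HD : D <= d x y) by (apply (proj1 D_is_inf); now exists x, y).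
  exists x, y. rewrite Hdist, <- Hx, <- Hy, (proj1 (proj2 (proj2 metric)) y x).
  repeat split; auto; f_equal; lra.
Qed.
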